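(* Let $\{x^k\}$ be generated by the ABP algorithm described in the context and assume (A1)–(A6), (A7') and (A8) below: (A1) $\mathcal F$ is continuously differentiable; (A2) $C$ and $Q$ are nonempty, closed and convex, and $z_i^*>-\infty$ for each $i$; (A3) each $f_i$ is convex; (A4) $\Omega\neq\emptyset$; (A5) $\lambda_k>0$, $\sum_k\lambda_k=\infty$, $\sum_k\lambda_k^2<\infty$; (A6) $\underline\alpha\le\alpha_k\le\bar\alpha$, $\underline\beta\le\beta_k\le\bar\beta$, $\underline\gamma\le\gamma_k\le\bar\gamma$ for all $k$, for constants $0<\underline\alpha\le\bar\alpha$, $0<\underline\beta\le\bar\beta$, $0<\underline\gamma\le\bar\gamma$; (A7') $\sigma:=\varphi^*-\varphi_{\mathrm{lb}}\le\varepsilon_0$ for a known constant $\varepsilon_0\ge0$; (A8) $\sup_k\|x^k\|\le B<\infty$. Let $\bar M<\infty$ be a uniform bound $\|d^k\|\le\bar M$ for all $k$ (which exists under these assumptions), $\bar\eta:=\max(\mu,\bar M)$ and $C_*:=\bar\alpha\bar\eta/\mu$. Then there exist a subsequence $\{k_j\}$ and a constant $\ell_*\in[0,C_*\varepsilon_0]$ with $\Phi_{k_j}\to\ell_*$ such that every cluster point $\hat x$ of $\{x^{k_j}\}$ satisfies: (i) $H(\hat x)\le \ell_*/\underline\beta\le C_*\varepsilon_0/\underline\beta$, i.e. $\mathrm{dist}(\hat x,C)\le\sqrt{2C_*\varepsilon_0/\underline\beta}$; (ii) $G(\hat x)\le\ell_*/\underline\gamma\le C_*\varepsilon_0/\underline\gamma$,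 i.e. $\mathrm{dist}(\mathcal F(\hat x),Q^+)\le\sqrt{2C_*\varepsilon_0/\underline\gamma}$; (iii) $\varphi(\hat x)\le\varphi_{\mathrm{lb}}+\ell_*/\underline\alpha\le\varphi^*+C_*\varepsilon_0/\underline\alpha$. Moreover, when $\varepsilon_0=0$, one has $\ell_*=0$, all three bounds vanish, and $\hat x\in\Omega$.
   Context: Let $n,m\ge1$, $\mathcal F=(f_1,\dots,f_m)\colon\mathbb R^n\to\mathbb R^m$, $C\subset\mathbb R^n$, $Q\subset\mathbb R^m$, and $Q^+:=Q-\mathbb R^m_+=\{y-u:y\in Q,u\in\mathbb R^m_+\}$. $P_S$ denotes Euclidean projection onto a nonempty closed convex set $S$. Let $z_i^*:=\inf_{x\in C}f_i(x)$, fix $r\in\mathbb R^m$ with all $r_i>0$, $\sum_ir_i=1$. Define $\varphi(x):=\max_i r_i(f_i(x)-z_i^* )$, $H(x):=\tfrac12\mathrm{dist}^2(x,C)$, $G(x):=\tfrac12\mathrm{dist}^2(\mathcal F(x),Q^+)$, $\mathcal S:=\{x:H(x)=0,G(x)=0\}$, $\varphi^*:=\inf_{\mathcal S}\varphi$, $\Omega:=\{x\in\mathcal S:\varphi(x)=\varphi^*\}$, $\varphi_{\mathrm{lb}}:=\inf_{x\in C}\varphi(x)$. ABP algorithm: given $x^0\in\mathbb R^n$, $\mu>0$, positive sequences $\{\alpha_k\},\{\beta_k\},\{\gamma_k\},\{\lambda_k\}$, for each $k$: $p^k:=P_{Q^+}(\mathcal F(x^k))$, $\rho^k:=\mathcal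 F(x^k)-p^k$, $z^k:=x^k-P_C(x^k)$, $v^k:=J_{\mathcal F}(x^k)^T\rho^k$, $w^k:=r_{i^*}\nabla f_{i^*}(x^k)$ for an arbitrary $i^*\in\arg\max_ir_i(f_i(x^k)-z_i^* )$, $\Delta_k:=\varphi(x^k)-\varphi_{\mathrm{lb}}$, $d^k:=\alpha_k\mathbf 1_{\{\Delta_k\ge0\}}w^k+\beta_kz^k+\gamma_kv^k$, $\eta_k:=\max(\mu,\|d^k\|)$, $x^{k+1}:=x^k-(\lambda_k/\eta_k)d^k$. Notation: $H_k:=H(x^k)$, $G_k:=G(x^k)$, $\Delta_k^+:=\max(\Delta_k,0)$, $\Phi_k:=\alpha_k\Delta_k^++\beta_kH_k+\gamma_kG_k$. *)

(* R : realType, vectors of R^n are row vectors 'rV[R]_n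
   (whose canonical topology is the product = Euclidean topology). *)
From HB Require Import structures.
From mathcomp Require Import all_boot all_order all_algebra.
From mathcomp Require Import all_classical all_reals all_analysis.
Set Implicit Arguments. Unset Strict Implicit. Unset Printing Implicit Defensive.
Import Order.TTheory GRing.Theory Num.Theory.
Import numFieldNormedType.Exports.
Local Open Scope classical_set_scope.
Local Open Scope ring_scope.

Section ABP.
Variable R : realType.

Definition eucdot (n : nat) (u v : 'rV[R]_n) : R := \sum_(j < n) u 0 j * v 0 j.
Definition eucnorm (n : nat) (v : 'rV[R]_n) : R := Num.sqrt (eucdot v v).

Definition setdist (n : nat) (x : 'rV[R]_n) (S : set 'rV[R]_n) : R :=
  inf [set eucnorm (x - y) | y in S].

Definition is_proj (n : nat) (S : set 'rV[R]_n) (x p : 'rV[R]_n) : Prop :=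
  S p /\ forall y, S y -> eucnorm (x - p) <= eucnorm (x - y).

Definition convex_set_rV (n : nat) (S : set 'rV[R]_n) : Prop :=
  forall x y (t : R), S x -> S y -> 0 <= t <= 1 -> S (t *: x + (1 - t) *: y).

Definition grad (n : nat) (f : 'rV[R]_n -> R) (x : 'rV[R]_n) : 'rV[R]_n :=
  \row_(j < n) ('d f x) (delta_mx 0 j).

Definition C1 (n : nat) (f : 'rV[R]_n -> R) : Prop :=
  (forall x, differentiable f x) /\ continuous (grad f).

Definition Fvec (n m : nat) (f : 'I_m -> 'rV[R]_n -> R) (x : 'rV[R]_n) : 'rV[R]_m :=
  \row_(i < m) f i x.

Definition JT (n m : nat) (f : 'I_m -> 'rV[R]_n -> R) (x : 'rV[R]_n) (rho : 'rV[R]_m)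
  : 'rV[R]_n := \sum_(i < m) rho 0 i *: grad (f i) x.

Definition Qplus (m : nat) (Q : set 'rV[R]_m) : set 'rV[R]_m :=
  [set z | exists (y u : 'rV[R]_m), Q y /\ (forall i, 0 <= u 0 i) /\ z = y - u].

Variables (n m : nat) (f : 'I_m -> 'rV[R]_n -> R) (C : set 'rV[R]_n)
  (Q : set 'rV[R]_m) (r : 'I_m -> R).

Definition zstar (i : 'I_m) : R := inf [set f i x | x in C].
(* max over the finite nonempty index set (m >= 1) *)
Definition phi (x : 'rV[R]_n) : R :=
  sup [set r i * (f i x - zstar i) | i in [set: 'I_m]].
Definition Hf (x : 'rV[R]_n) : R := (setdist x C) ^+ 2 / 2.
Definition Gf (x : 'rV[R]_n) : R := (setdist (Fvec f x) (Qplus Q)) ^+ 2 / 2.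
Definition Sfeas : set 'rV[R]_n := [set x | Hf x = 0 /\ Gf x = 0].
Definition phistar : R := inf [set phi x | x in Sfeas].
Definition Omega : set 'rV[R]_n := [set x | Sfeas x /\ phi x = phistar].
Definition philb : R := inf [set phi x | x in C].

End ABP.

(* Fix x* in Omega. Convexity of the f_i, the obtuse-angle property of Euclidean
   projections and the gap phi* - phi_lb <= eps0 give
   <d^k, x^k - x*> >= Phi_k - ahi eps0.  While Phi_k stays above a level
   c > ahi eps0, the normalized step therefore decreases ||x^k - x*||^2 by a
   fixed multiple of lambda_k, up to an error lambda_k^2; since
   sum lambda_k = oo and sum lambda_k^2 < oo this cannot last, so Phi_k <= c
   infinitely often.  Bolzano-Weierstrass then yields Phi_{k_j} -> l* <= ahi eps0,
   and the bounds alo Delta^+, blo H, glo G <= Phi pass to cluster points by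
   continuity. *)

From HB Require Import structures.
From mathcomp Require Import all_boot all_order all_algebra.
From mathcomp Require Import all_classical all_reals all_analysis.
From mathcomp Require Import ring lra.
Import Order.TTheory GRing.Theory Num.Theory.
Import numFieldNormedType.Exports.
Local Open Scope classical_set_scope.
Local Open Scope ring_scope.

Set Implicit Arguments.
Unset Strict Implicit.
Unset Printing Implicit Defensive.

Section Euclidean.
Variables (R : realType) (n : nat).
Implicit Types (a : R) (u v w x : 'rV[R]_n).

Lemma eucdotC u v : eucdot u v = eucdot v u.
Proof. by apply: eq_bigr => j _; rewrite mulrC. Qed.

Lemma eucdotDl u v w : eucdot (u + v) w = eucdot u w + eucdot v w.
Proof. by rewrite /eucdot -big_split; apply: eq_bigr => j _; rewrite mxE mulrDl. Qed.

Lemma eucdotZl a u w : eucdot (a *: u) w = a * eucdot u w.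
Proof. by rewrite /eucdot mulr_sumr; apply: eq_bigr => j _; rewrite mxE mulrA. Qed.

Lemma eucdotBl u v w : eucdot (u - v) w = eucdot u w - eucdot v w.
Proof. by rewrite eucdotDl -scaleN1r eucdotZl mulN1r. Qed.

Lemma eucdotDr u v w : eucdot w (u + v) = eucdot w u + eucdot w v.
Proof. by rewrite eucdotC eucdotDl !(eucdotC w). Qed.

Lemma eucdotZr a u w : eucdot w (a *: u) = a * eucdot w u.
Proof. by rewrite eucdotC eucdotZl eucdotC. Qed.

Lemma eucdotBr u v w : eucdot w (u - v) = eucdot w u - eucdot w v.
Proof. by rewrite eucdotC eucdotBl !(eucdotC w). Qed.

Lemma eucdot_suml (I : Type) (s : seq I) (F : I -> 'rV[R]_n) w :
  eucdot (\sum_(i <- s) F i) w = \sum_(i <- s) eucdot (F i) w.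
Proof.
elim: s => [|i s IH]; last by rewrite !big_cons eucdotDl IH.
by rewrite !big_nil /eucdot big1 // => j _; rewrite mxE mul0r.
Qed.

Lemma eucdot_delta u i : eucdot u (delta_mx 0 i) = u 0 i.
Proof.
rewrite /eucdot (bigD1 i) //= mxE !eqxx mulr1 big1 ?addr0 // => j ji.
by rewrite mxE (negbTE ji) mulr0.
Qed.

Lemma eucdotii_ge0 u : 0 <= eucdot u u.
Proof. by apply: sumr_ge0 => j _; rewrite -expr2 sqr_ge0. Qed.

Lemma eucnorm_ge0 u : 0 <= eucnorm u.
Proof. exact: sqrtr_ge0. Qed.

Lemma eucnorm_sqr u : eucnorm u ^+ 2 = eucdot u u.
Proof. by rewrite sqr_sqrtr // eucdotii_ge0. Qed.

Lemma eucdistC u v : eucnorm (u - v) = eucnorm (v - u).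
Proof.
rewrite -opprB /eucnorm -scaleN1r eucdotZl eucdotZr mulrA.
by rewrite [-1 * -1]mulrNN mul1r mul1r.
Qed.

Lemma eucdot_subZ u v a :
  eucdot (u - a *: v) (u - a *: v) = eucdot u u - 2 * a * eucdot u v + a ^+ 2 * eucdot v v.
Proof. rewrite !(eucdotBl, eucdotBr, eucdotZl, eucdotZr) (eucdotC v u); ring. Qed.

Lemma eucdot_sqr_le u v : eucdot u v ^+ 2 <= eucdot u u * eucdot v v.
Proof.
set A := eucdot u u; set B := eucdot u v; set D := eucdot v v.
have quad t : 0 <= A - 2 * t * B + t ^+ 2 * D by rewrite -eucdot_subZ eucdotii_ge0.
have A0 : 0 <= A := eucdotii_ge0 u.
have [D0|D0] := eqVneq D 0.
  have [->|B0] := eqVneq B 0; first by rewrite expr0n /= mulr_ge0 ?eucdotii_ge0.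
  have := quad ((A + 1) / (2 * B)); rewrite D0 mulr0 addr0.
  have -> : 2 * ((A + 1) / (2 * B)) * B = A + 1 by field; rewrite B0.
  lra.
have Dpos : 0 < D by rewrite lt_def D0 eucdotii_ge0.
have := quad (B / D).
have -> : A - 2 * (B / D) * B + (B / D) ^+ 2 * D = (A * D - B ^+ 2) / D by field.
rewrite pmulr_lge0 ?invr_gt0 //; lra.
Qed.

Lemma eucdot_le_norm u v : eucdot u v <= eucnorm u * eucnorm v.
Proof.
apply: le_trans (ler_norm _) _.
by rewrite -sqrtr_sqr /eucnorm -sqrtrM ?eucdotii_ge0 // ler_wsqrtr // eucdot_sqr_le.
Qed.

Lemma eucnormD u v : eucnorm (u + v) <= eucnorm u + eucnorm v.
Proof.
rewrite -(ler_pXn2r (n := 2)) ?nnegrE ?addr_ge0 ?eucnorm_ge0 //.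
rewrite sqrrD !eucnorm_sqr eucdotDl !eucdotDr (eucdotC v u).
have := eucdot_le_norm u v; lra.
Qed.

Lemma eucnorm_le_sum u : eucnorm u <= \sum_j `|u 0 j|.
Proof.
rewrite -[leRHS]ger0_norm ?sumr_ge0 // -sqrtr_sqr ler_wsqrtr // /eucdot.
suff : 0 <= \sum_j `|u 0 j| /\ \sum_j u 0 j * u 0 j <= (\sum_j `|u 0 j|) ^+ 2 by case.
elim/big_rec2: _ => [|j s t _ [t0 IH]]; first by rewrite expr0n lexx.
rewrite sqrrD -[u 0 j * u 0 j]expr2 -real_normK ?num_real //.
have : 0 <= `|u 0 j| * t by rewrite mulr_ge0.
have := normr_ge0 (u 0 j); lra.
Qed.

Lemma normalized_step_le x y xs d lam mu M delta :
  y = x - (lam / Num.max mu (eucnorm d)) *: d ->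
  0 < mu -> 0 <= lam -> eucnorm d <= M -> delta <= eucdot d (x - xs) -> 0 <= delta ->
  eucdot (y - xs) (y - xs)
    <= eucdot (x - xs) (x - xs) - 2 * delta / Num.max mu M * lam + lam ^+ 2.
Proof.
move=> -> mu0 lam0 dM dx delta0.
set eta := Num.max mu (eucnorm d); set t := lam / eta.
have eta0 : 0 < eta by rewrite lt_max mu0.
have t0 : 0 <= t by rewrite divr_ge0 // ltW.
rewrite -/eta -/t addrAC eucdot_subZ (eucdotC _ d).
have step_le : t * eucnorm d <= lam by rewrite mulrAC ler_pdivrMr // ler_wpM2l // le_max lexx orbT.
have step_sq : t ^+ 2 * eucdot d d <= lam ^+ 2.
  have tn0 : 0 <= t * eucnorm d by rewrite mulr_ge0 ?eucnorm_ge0.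
  by rewrite -eucnorm_sqr -exprMn !expr2; apply: ler_pM.
have descent : lam / Num.max mu M * delta <= t * eucdot d (x - xs).
  apply: ler_pM => //; first by rewrite divr_ge0 // le_max ltW.
  rewrite ler_wpM2l // lef_pV2 ?posrE ?lt_max ?mu0 //.
  by rewrite ge_max !le_max lexx dM !orbT.
lra.
Qed.

End Euclidean.

Section SetDistance.
Variables (R : realType) (n : nat).
Implicit Types (S : set 'rV[R]_n) (x y p : 'rV[R]_n).

Lemma setdist_ge0 S x : S !=set0 -> 0 <= setdist x S.
Proof.
move=> [y Sy]; apply: lb_le_inf; first by exists (eucnorm (x - y)), y.
by move=> _ [z _ <-]; exact: eucnorm_ge0.
Qed.

Lemma setdist_le S x y : S y -> setdist x S <= eucnorm (x - y).
Proof.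
move=> Sy; apply: ge_inf; last by exists y.
by exists 0 => _ [z _ <-]; exact: eucnorm_ge0.
Qed.

Lemma setdist_proj S x p : is_proj S x p -> setdist x S = eucnorm (x - p).
Proof.
move=> [Sp minp]; apply/le_anti; rewrite setdist_le //=.
apply: lb_le_inf; first by exists (eucnorm (x - p)), p.
by move=> _ [y Sy <-]; exact: minp.
Qed.

Lemma setdist_lipschitz S x y : S !=set0 ->
  `|setdist x S - setdist y S| <= eucnorm (x - y).
Proof.
move=> [s0 Ss0].
suff lip a b : setdist a S <= eucnorm (a - b) + setdist b S.
  have := lip x y; have := lip y x; rewrite eucdistC ler_norml => *.
  by apply/andP; split; lra.
rewrite -lerBlDl; apply: lb_le_inf; first by exists (eucnorm (b - s0)), s0.
move=> _ [s Ss <-]; rewrite lerBlDl; apply: le_trans (setdist_le a Ss) _.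
by rewrite -(subrKA b a (- s)) eucnormD.
Qed.

Lemma setdist_eq0_approx S x e : S !=set0 -> setdist x S = 0 -> 0 < e ->
  exists2 y, S y & eucnorm (x - y) < e.
Proof.
move=> [s Ss] dx0 e0.
have [_ [y Sy <-] lt_e] := @inf_lt _ [set eucnorm (x - y) | y in S] e
  (ex_intro _ _ (ex_intro2 _ _ s Ss erefl)) ltac:(by rewrite -/(setdist x S) dx0).
by exists y.
Qed.

Lemma mx_norm_le_eucnorm (v : 'rV[R]_n) : `|v| <= eucnorm v.
Proof.
rewrite [leLHS]/Num.norm /= mx_normrE; apply/bigmax_leP; split; first exact: eucnorm_ge0.
move=> [i j] _ /=; rewrite (ord1 i) -sqrtr_sqr ler_wsqrtr //.
by rewrite /eucdot (bigD1 j) //= -expr2 lerDl sumr_ge0 // => k _; rewrite -expr2 sqr_ge0.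
Qed.

Lemma closed_setdist_eq0 S y : closed S -> S !=set0 -> setdist y S = 0 -> S y.
Proof.
move=> clS S0 dy0; apply: clS => B /nbhs_ballP [e e0 eB].
have [s Ss lt_e] := setdist_eq0_approx S0 dy0 e0.
exists s; split => //; apply: eB; rewrite -ball_normE /=.
exact: le_lt_trans (mx_norm_le_eucnorm _) lt_e.
Qed.

Lemma is_proj_obtuse S x p y : convex_set_rV S -> is_proj S x p -> S y ->
  eucdot (x - p) (y - p) <= 0.
Proof.
move=> cvxS [Sp minp] Sy.
set B := eucdot (x - p) (y - p); set D := eucdot (y - p) (y - p).
(* minimality of p against the points p + t (y - p) of S *)
have small t : 0 < t -> t <= 1 -> 2 * B <= t * D.
  move=> t0 t1; have /minp : S (t *: y + (1 - t) *: p) by apply: cvxS => //; rewrite ltW.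
  have -> : x - (t *: y + (1 - t) *: p) = (x - p) - t *: (y - p).
    by apply/rowP => j; rewrite !mxE; ring.
  rewrite /eucnorm ler_sqrt ?eucdotii_ge0 // eucdot_subZ -/B -/D => le_sq.
  have : 0 <= t * (t * D - 2 * B) by rewrite mulrBr mulrA -expr2; lra.
  by rewrite pmulr_rge0 // subr_ge0.
have D0 : 0 <= D := eucdotii_ge0 _.
rewrite leNgt; apply/negP => B0.
have t0 : 0 < B / (D + B) by rewrite divr_gt0 //; lra.
have t1 : B / (D + B) <= 1 by rewrite ler_pdivrMr ?mul1r; lra.
have := small _ t0 t1.
have : B / (D + B) * D <= B by rewrite mulrAC ler_pdivrMr ?ler_pM2l; lra.
lra.
Qed.

Lemma is_proj_obtuse_closure S x p y : convex_set_rV S -> is_proj S x p ->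
  setdist y S = 0 -> eucdot (x - p) (y - p) <= 0.
Proof.
move=> cvxS projp dy0; have S0 : S !=set0 by exists p; case: projp.
apply/ler_addgt0Pr => e e0; rewrite add0r.
have N0 := eucnorm_ge0 (x - p).
have e1 : 0 < e / (eucnorm (x - p) + 1) by rewrite divr_gt0 //; lra.
have [s Ss lt_s] := setdist_eq0_approx S0 dy0 e1.
have -> : y - p = (s - p) + (y - s) by rewrite [RHS]addrC subrKA.
rewrite eucdotDr.
have := is_proj_obtuse cvxS projp Ss.
have : eucnorm (x - p) * eucnorm (y - s) <= e.
  apply: le_trans (_ : eucnorm (x - p) * (e / (eucnorm (x - p) + 1)) <= e).
    by rewrite ler_wpM2l // ltW.
  rewrite mulrA ler_pdivrMr; last lra.
  by rewrite mulrC ler_pM2l //; lra.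
have := eucdot_le_norm (x - p) (y - s); lra.
Qed.

Lemma proj_sqr_le_eucdot S x p y : convex_set_rV S -> is_proj S x p ->
  setdist y S = 0 -> eucnorm (x - p) ^+ 2 <= eucdot (x - p) (x - y).
Proof.
move=> cvxS projp dy0; have obtuse := is_proj_obtuse_closure cvxS projp dy0.
have -> : x - y = (x - p) - (y - p) by rewrite opprB subrKA.
rewrite eucdotBr eucnorm_sqr; lra.
Qed.

End SetDistance.

Section Convexity.
Variables (R : realType) (n : nat).

Definition convex_fun (g : 'rV[R]_n -> R) : Prop :=
  forall a b (t : R), 0 <= t <= 1 -> g (t *: a + (1 - t) *: b) <= t * g a + (1 - t) * g b.

Lemma eucdot_grad (g : 'rV[R]_n -> R) x v : eucdot (grad g x) v = 'd g x v.
Proof.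
rewrite {2}(row_sum_delta v) linear_sum /eucdot; apply: eq_bigr => j _.
by rewrite linearZ mxE /= mulrC.
Qed.

Lemma convex_grad_le (g : 'rV[R]_n -> R) x y : differentiable g x -> convex_fun g ->
  eucdot (grad g x) (y - x) <= g y - g x.
Proof.
move=> dg cvxg; rewrite eucdot_grad -deriveE //.
set q := fun h : R => h^-1 *: ((g \o shift x) (h *: (y - x)) - g x).
have right_sub : (0 : R)^'+ `=>` (0 : R)^'.
  by move=> A [e e0 eA]; exists e => // t dt t0; apply: eA => //; exact: lt0r_neq0.
have qlim : q @ 0^'+ --> 'D_(y - x) g x.
  exact: cvg_trans (cvg_app q right_sub) (diff_derivable dg).
apply: (cvgr_to_le qlim); near=> h.
have h0 : 0 < h by near: h; exact: nbhs_right_gt.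
have h1 : h <= 1 by near: h; apply: nbhs_right_le; exact: ltr01.
have := cvxg y x h; rewrite ltW // h1 => /(_ isT) cvx_h.
rewrite /q /=.
have -> : h *: (y - x) + x = h *: y + (1 - h) *: x by apply/rowP => j; rewrite !mxE; ring.
change (h^-1 * (g (h *: y + (1 - h) *: x) - g x) <= g y - g x).
rewrite mulrC ler_pdivrMr //; lra.
Unshelve. all: by end_near.
Qed.

End Convexity.

Section Continuity.
Variable R : realType.

Lemma continuous_at_dominated (T : topologicalType) (I : finType)
    (g : T -> R) (h : I -> T -> R) t :
  (forall i, {for t, continuous (h i)}) ->
  (forall s, `|g s - g t| <= \sum_i `|h i s - h i t|) -> {for t, continuous g}.
Proof.
move=> hc dom; apply/cvgrPdist_le => e e0.
have N0 : 0 < #|I|%:R + 1 :> R by rewrite ltr_wpDl.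
have near_i i : \forall s \near t, `|h i t - h i s| <= e / (#|I|%:R + 1).
  by apply: cvgr_dist_le; [exact: hc | exact: divr_gt0].
have := filter_forall (nbhs_pfilter t) near_i.
apply: filterS => s hs; rewrite distrC; apply: le_trans (dom s) _.
apply: le_trans (_ : \sum_(i : I) e / (#|I|%:R + 1) <= e).
  by apply: ler_sum => i _; rewrite distrC; exact: hs.
rewrite sumr_const -[e / _ *+ _]mulr_natl mulrCA ger_pMr // ler_pdivrMr // mul1r.
by rewrite -[X in X <= _]addr0; apply: lerD (lexx _) ler01.
Qed.

Lemma setdist_continuous (T : topologicalType) m (F : T -> 'rV[R]_m) S t :
  S !=set0 -> (forall j, {for t, continuous (fun s => F s 0 j)}) ->
  {for t, continuous (fun s => setdist (F s) S)}.
Proof.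
move=> S0 Fc; apply: (continuous_at_dominated Fc) => s.
apply: le_trans (setdist_lipschitz _ _ S0) _.
by apply: le_trans (eucnorm_le_sum _) _; under eq_bigr do rewrite !mxE.
Qed.

Lemma cluster_le_lim (T : topologicalType) (g : T -> R) (xs : nat -> T) (u : nat -> R) L t :
  {for t, continuous g} -> u @ \oo --> L -> (forall j, g (xs j) <= u j) ->
  cluster (xs @ \oo) t -> g t <= L.
Proof.
move=> gc uL gu; rewrite cluster_cvgE => -[G PG [Gt xsG]].
apply/ler_addgt0Pr => e e0; apply: (cvgr_to_le (cvg_trans (cvg_app g Gt) gc)).
have Le : L < L + e by rewrite ltrDl.
apply: xsG; have : \forall j \near \oo, g (xs j) <= L + e.
  have : \forall j \near \oo, u j < L + e by apply: cvgr_lt; [exact: uL | exact: Le].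
  by apply: filterS => j /ltW; exact: le_trans.
exact.
Qed.

End Continuity.

Section Sequences.
Variable R : realType.

Lemma nonneg_descent_contra (D lam : nat -> R) (a : R) N : 0 < a ->
  (forall k, 0 <= D k) ->
  (forall k, (N <= k)%N -> D k.+1 <= D k - a * lam k + lam k ^+ 2) ->
  [series lam k]_k @ \oo --> +oo -> cvgn [series lam k ^+ 2]_k -> False.
Proof.
move=> a0 D0 descD divS cvgS2.
set S := [series lam k]_k; set S2 := [series lam k ^+ 2]_k.
have S2_incr : nondecreasing_seq S2.
  by apply/nondecreasing_seqP => k; rewrite /S2 seriesSr lerDl sqr_ge0.
have S2_le k : S2 k <= limn S2 := nondecreasing_cvgn_le S2_incr cvgS2 k.
have S2_ge0 k : 0 <= S2 k by rewrite (le_trans _ (S2_incr _ _ (leq0n k))) // /S2 /series /= big_geq.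
have telescoped j : D (N + j)%N <= D N - a * (S (N + j)%N - S N) + (S2 (N + j)%N - S2 N).
  elim: j => [|j IH]; first by rewrite addn0 !subrr; lra.
  rewrite addnS /S /S2 !seriesSr -/S -/S2 /=.
  have := descD (N + j)%N (leq_addr _ _); lra.
set M := (D N + limn S2) / a.
have aM : a * M = D N + limn S2 by rewrite /M mulrC divfK ?gt_eqF.
have [K _ SK] := proj1 (cvgryPge _) divS (S N + M + 1).
have SNK : S N + M + 1 <= S (N + K)%N := SK _ (leq_addl _ _).
have := telescoped K; have := D0 (N + K)%N; have := S2_le (N + K)%N; have := S2_ge0 N.
have : a * (M + 1) <= a * (S (N + K)%N - S N) by rewrite ler_pM2l //; lra.
nra.
Qed.

Lemma extract_increasing (P : nat -> nat -> Prop) :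
  (forall j N, exists k, (N <= k)%N /\ P j k) ->
  exists kj : nat -> nat, (forall j, (kj j < kj j.+1)%N) /\ forall j, P j (kj j).
Proof.
move=> exP; have [next nextP] : exists next : nat -> nat -> nat,
    forall j N, (N <= next j N)%N /\ P j (next j N).
  by exists (fun j N => projT1 (cid (exP j N))) => j N; case: cid.
pose kj := nat_rect (fun=> nat) (next 0%N 0%N) (fun j k => next j.+1 k.+1).
by exists kj; split => [j|[|j]]; [exact: (nextP _ _).1 | exact: (nextP _ _).2 ..].
Qed.

Lemma subseq_cvg_le (u : nat -> R) (K : R) : (forall k, 0 <= u k) ->
  (forall c, K < c -> forall N, exists k, (N <= k)%N /\ u k <= c) ->
  exists (kj : nat -> nat) (L : R),
    (forall j, (kj j < kj j.+1)%N) /\ 0 <= L <= K /\ (u \o kj) @ \oo --> L.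
Proof.
move=> u0 freq.
have [k [k_incr uk]] : exists k : nat -> nat,
    (forall j, (k j < k j.+1)%N) /\ forall j, u (k j) <= K + j.+1%:R^-1.
  apply: (@extract_increasing (fun j k => u k <= K + j.+1%:R^-1)) => j.
  by apply: freq; rewrite ltrDl.
have v_bnd : bounded_fun (u \o k).
  exists (K + 1); split => [|M KM j _]; first exact: num_real.
  rewrite /= ger0_norm //; apply/ltW/le_lt_trans/KM; apply: le_trans (uk j) _.
  by rewrite lerD2l invf_le1 // ler1n.
have [g g_incr /cvg_ex [L vgL]] := bolzano_weierstrass v_bnd.
have gS j : (g j < g j.+1)%N.
  have g_mono : (g j.+1 <= g j)%N = (j.+1 <= j)%N := g_incr j.+1 j.
  by rewrite ltnNge g_mono ltnn.
have g_ge j : (j <= g j)%N by elim: j => // j IH; exact: leq_ltn_trans IH (gS j).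
exists (k \o g), L; split; first by move=> j; apply: (homo_ltn ltn_trans k_incr).
split; last exact: vgL.
apply/andP; split.
  by apply: (cvgr_to_ge vgL); apply: nearW => j; exact: u0.
apply/ler_addgt0Pr => e e0; apply: (cvgr_to_le vgL).
near=> j; apply: le_trans (uk (g j)) _; rewrite lerD2l.
apply: ltW; apply: le_lt_trans (_ : j.+1%:R^-1 < e).
  by rewrite lef_pV2 ?posrE // ler_nat ltnS g_ge.
by near: j; exact: near_infty_natSinv_lt (PosNum e0).
Unshelve. all: by end_near.
Qed.

End Sequences.

Lemma sqr_half_eq0 (R : realType) (a : R) : a ^+ 2 / 2 = 0 -> a = 0.
Proof. by move/eqP; rewrite mulf_eq0 invr_eq0 pnatr_eq0 orbF sqrf_eq0 => /eqP. Qed.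

Lemma sqr_half_le_sqrt (R : realType) (s a : R) : 0 <= s -> s ^+ 2 / 2 <= a ->
  s <= Num.sqrt (2 * a).
Proof. by move=> s0 sa; rewrite -(ger0_norm s0) -sqrtr_sqr ler_wsqrtr //; lra. Qed.

Section QplusSet.
Variables (R : realType) (m : nat) (Q : set 'rV[R]_m).

Lemma Qplus_neq0 : Q !=set0 -> Qplus Q !=set0.
Proof. by move=> [y Qy]; exists y, y, 0; split => //; split => [i|]; rewrite ?mxE ?subr0. Qed.

Lemma Qplus_convex : convex_set_rV Q -> convex_set_rV (Qplus Q).
Proof.
move=> cvxQ a b t [ya [ua [Qya [ua0 ->]]]] [yb [ub [Qyb [ub0 ->]]]] /andP[t0 t1].
exists (t *: ya + (1 - t) *: yb), (t *: ua + (1 - t) *: ub); split.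
  by apply: cvxQ; rewrite ?t0.
split; last by apply/rowP => j; rewrite !mxE; ring.
by move=> i; rewrite !mxE addr_ge0 ?mulr_ge0 ?ua0 ?ub0 ?subr_ge0.
Qed.

(* [p - e_i] stays in [Q^+], so the projection residual is componentwise nonnegative *)
Lemma Qplus_proj_residual_ge0 z p i : convex_set_rV Q -> is_proj (Qplus Q) z p ->
  0 <= (z - p) 0 i.
Proof.
move=> cvxQ projp.
have : Qplus Q (p - delta_mx 0 i).
  case: projp => -[y [u [Qy [u0 ->]]]] _; exists y, (u + delta_mx 0 i); split => //; split.
    by move=> j; rewrite !mxE addr_ge0 ?ler0n.
  by rewrite opprD addrA.
move/(is_proj_obtuse (Qplus_convex cvxQ) projp).
by rewrite addrAC subrr add0r -[- delta_mx _ _]scaleN1r eucdotZr eucdot_delta; lra.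
Qed.

End QplusSet.

Section ABPProblem.
Variables (R : realType) (n m : nat) (f : 'I_m -> 'rV[R]_n -> R) (C : set 'rV[R]_n)
  (Q : set 'rV[R]_m) (r : 'I_m -> R).
Hypothesis m_gt0 : (0 < m)%N.
Hypothesis r_ge0 : forall i, 0 <= r i.
Hypothesis f_lb : forall i, has_lbound [set f i y | y in C].
Hypotheses (C0 : C !=set0) (C_closed : closed C).

Local Notation phi := (phi f C r).
Local Notation term i y := (r i * (f i y - zstar f C i)).

Lemma phi_ge y i : term i y <= phi y.
Proof.
apply: ub_le_sup; last by exists i.
exists (\sum_j `|term j y|) => _ [j _ <-]; apply: le_trans (ler_norm _) _.
by rewrite (bigD1 j) //= lerDl sumr_ge0.
Qed.

Lemma phi_le y b : (forall i, term i y <= b) -> phi y <= b.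
Proof.
move=> termb; apply: ge_sup => [|_ [i _ <-]] //.
by exists (term (Ordinal m_gt0) y), (Ordinal m_gt0).
Qed.

Lemma phi_ge0 y : C y -> 0 <= phi y.
Proof.
move=> Cy; apply: le_trans (phi_ge y (Ordinal m_gt0)).
by rewrite mulr_ge0 // subr_ge0; apply: ge_inf => //; exists y.
Qed.

Lemma Hf_ge0 y : 0 <= Hf C y.
Proof. by rewrite divr_ge0 ?sqr_ge0. Qed.

Lemma Gf_ge0 y : 0 <= Gf f Q y.
Proof. by rewrite divr_ge0 ?sqr_ge0. Qed.

Lemma Hf_eq0 y : Hf C y = 0 -> C y.
Proof. by move/sqr_half_eq0; exact: closed_setdist_eq0. Qed.

Lemma philb_le y : C y -> philb f C r <= phi y.
Proof. by move=> Cy; apply: ge_inf; [exists 0 => _ [z /phi_ge0 ? <-] | exists y]. Qed.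

Lemma phistar_le y : Sfeas f C Q y -> phistar f C Q r <= phi y.
Proof.
move=> Sy; apply: ge_inf; last by exists y.
by exists 0 => _ [z [/Hf_eq0 /phi_ge0 ? _] <-].
Qed.

Lemma philb_le_phistar : Sfeas f C Q !=set0 -> philb f C r <= phistar f C Q r.
Proof.
move=> [y Sy]; apply: lb_le_inf; first by exists (phi y), y.
by move=> _ [z [/Hf_eq0 Cz _] <-]; exact: philb_le.
Qed.

Lemma Omega_of_bounds y : Sfeas f C Q !=set0 ->
  Hf C y <= 0 -> Gf f Q y <= 0 -> phi y <= philb f C r -> Omega f C Q r y.
Proof.
move=> S0 Hy Gy phiy.
have Sy : Sfeas f C Q y by split; apply/le_anti; rewrite ?Hf_ge0 ?Gf_ge0 ?andbT.
split => //; apply/le_anti; rewrite phistar_le // andbT.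
exact: le_trans phiy (philb_le_phistar S0).
Qed.

Lemma Hf_continuous y : {for y, continuous (Hf C)}.
Proof.
have dc : {for y, continuous (fun z => setdist z C)}.
  by apply: setdist_continuous => // j; exact: coord_continuous.
exact (continuousM (continuousM dc dc) (@cst_continuous _ _ (2^-1 : R) y)).
Qed.

Lemma Gf_continuous y : Q !=set0 -> (forall i, continuous (f i)) ->
  {for y, continuous (Gf f Q)}.
Proof.
move=> Q0 fc; have dc : {for y, continuous (fun z => setdist (Fvec f z) (Qplus Q))}.
  apply: setdist_continuous => [|j]; first exact: Qplus_neq0.
  by rewrite (_ : (fun z => _) = f j); [exact: fc | apply/funext => z; rewrite mxE].
exact (continuousM (continuousM dc dc) (@cst_continuous _ _ (2^-1 : R) y)).
Qed.

Lemma term_continuous i y : continuous (f i) -> {for y, continuous (fun z => term i z)}.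
Proof.
move=> fc.
exact (continuousM (@cst_continuous _ _ (r i) y) (continuousB (fc y) (@cst_continuous _ _ (zstar f C i) y))).
Qed.

Hypothesis f_diff : forall i y, differentiable (f i) y.
Hypothesis f_convex : forall i, convex_fun (f i).

Lemma eucdot_grad_ge i x y : f i x - f i y <= eucdot (grad (f i) x) (x - y).
Proof.
have := convex_grad_le y (f_diff i x) (f_convex i).
by rewrite -opprB -scaleN1r eucdotZr; lra.
Qed.

Lemma phi_sub_le_eucdot i0 x y : (forall i, term i x <= term i0 x) ->
  phi x - phi y <= eucdot (r i0 *: grad (f i0) x) (x - y).
Proof.
move=> argmax; have := phi_le argmax; have := phi_ge y i0.
have := ler_wpM2l (r_ge0 i0) (eucdot_grad_ge i0 x y).
rewrite eucdotZl; lra.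
Qed.

Hypothesis C_convex : convex_set_rV C.

Lemma Hf_le_eucdot x p y : is_proj C x p -> setdist y C = 0 ->
  Hf C x <= eucdot (x - p) (x - y).
Proof.
move=> projp dy0; have := proj_sqr_le_eucdot C_convex projp dy0.
rewrite /Hf (setdist_proj projp); have := sqr_ge0 (eucnorm (x - p)); lra.
Qed.

Hypothesis Q_convex : convex_set_rV Q.

Lemma Gf_le_eucdot x p y : is_proj (Qplus Q) (Fvec f x) p ->
  setdist (Fvec f y) (Qplus Q) = 0 ->
  Gf f Q x <= eucdot (JT f x (Fvec f x - p)) (x - y).
Proof.
move=> projp dy0; set rho := Fvec f x - p.
have lin : eucdot rho (Fvec f x - Fvec f y) <= eucdot (JT f x rho) (x - y).
  rewrite /JT eucdot_suml; apply: ler_sum => i _; rewrite eucdotZl.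
  apply: ler_wpM2l; first exact: (Qplus_proj_residual_ge0 i Q_convex projp).
  by rewrite !mxE; exact: eucdot_grad_ge.
have := proj_sqr_le_eucdot (Qplus_convex Q_convex) projp dy0.
rewrite /Gf (setdist_proj projp) -/rho; have := sqr_ge0 (eucnorm rho); lra.
Qed.


Hypothesis Q0 : Q !=set0.

Section ABPIteration.
Variables (mu : R) (alpha beta gamma lambda : nat -> R) (x : nat -> 'rV[R]_n)
  (p : nat -> 'rV[R]_m) (PC : nat -> 'rV[R]_n) (istar : nat -> 'I_m)
  (d : nat -> 'rV[R]_n) (alo ahi blo glo eps0 Mbar : R).
Hypothesis hmu : 0 < mu.
Hypothesis hp : forall k, is_proj (Qplus Q) (Fvec f (x k)) (p k).
Hypothesis hPC : forall k, is_proj C (x k) (PC k).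
Hypothesis histar : forall k i, term i (x k) <= term (istar k) (x k).
Hypothesis hd : forall k, d k =
  (if 0 <= phi (x k) - philb f C r then alpha k else 0)
      *: (r (istar k) *: grad (f (istar k)) (x k))
  + beta k *: (x k - PC k) + gamma k *: JT f (x k) (Fvec f (x k) - p k).
Hypothesis hx : forall k, x k.+1 = x k - (lambda k / Num.max mu (eucnorm (d k))) *: d k.
Hypothesis lambda_gt0 : forall k, 0 < lambda k.
Hypothesis lambda_div : [series lambda k]_k @ \oo --> +oo.
Hypothesis lambda_sq : cvgn [series lambda k ^+ 2]_k.
Hypotheses (alo_gt0 : 0 < alo) (blo_gt0 : 0 < blo) (glo_gt0 : 0 < glo).
Hypothesis alpha_bnd : forall k, alo <= alpha k <= ahi.
Hypothesis beta_ge : forall k, blo <= beta k.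
Hypothesis gamma_ge : forall k, glo <= gamma k.
Hypothesis Omega0 : Omega f C Q r !=set0.
Hypothesis sigma_le : phistar f C Q r - philb f C r <= eps0.
Hypothesis d_bnd : forall k, eucnorm (d k) <= Mbar.

Definition Phi k := alpha k * Num.max (phi (x k) - philb f C r) 0
  + beta k * Hf C (x k) + gamma k * Gf f Q (x k).

Lemma Phi_ge_parts k : [/\ alo * Num.max (phi (x k) - philb f C r) 0 <= Phi k,
  blo * Hf C (x k) <= Phi k & glo * Gf f Q (x k) <= Phi k].
Proof.
have /andP[al _] := alpha_bnd k; have bl := beta_ge k; have gl := gamma_ge k.
have M0 : 0 <= Num.max (phi (x k) - philb f C r) 0 by rewrite le_max lexx orbT.
have H0 := Hf_ge0 (x k); have G0 := Gf_ge0 (x k).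
have := ler_wpM2r M0 al; have := ler_wpM2r H0 bl; have := ler_wpM2r G0 gl.
have := mulr_ge0 (ltW alo_gt0) M0; have := mulr_ge0 (ltW blo_gt0) H0.
have := mulr_ge0 (ltW glo_gt0) G0; rewrite /Phi => *; split; lra.
Qed.

Lemma Phi_ge0 k : 0 <= Phi k.
Proof.
have [_ bH _] := Phi_ge_parts k.
exact: le_trans (mulr_ge0 (ltW blo_gt0) (Hf_ge0 _)) bH.
Qed.

Lemma eucdot_dir_ge xs k : Omega f C Q r xs ->
  Phi k - ahi * eps0 <= eucdot (d k) (x k - xs).
Proof.
move=> [[/sqr_half_eq0 Hxs /sqr_half_eq0 Gxs] phixs].
have sigma0 : 0 <= phistar f C Q r - philb f C r.
  by rewrite subr_ge0 philb_le_phistar //; case: Omega0 => y [Sy _]; exists y.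
have /andP[al ah] := alpha_bnd k; have bl := beta_ge k; have gl := gamma_ge k.
have w_ge := phi_sub_le_eucdot xs (histar k); rewrite phixs in w_ge.
have z_ge := ler_wpM2l (le_trans (ltW blo_gt0) bl) (Hf_le_eucdot (hPC k) Hxs).
have v_ge := ler_wpM2l (le_trans (ltW glo_gt0) gl) (Gf_le_eucdot (hp k) Gxs).
have sigma_ahi : alpha k * (phistar f C Q r - philb f C r) <= ahi * eps0.
  by apply: ler_pM => //; exact: le_trans (ltW alo_gt0) al.
rewrite hd !eucdotDl !eucdotZl /Phi; case: ifP => [Delta0 | /negbT].
  have := ler_wpM2l (le_trans (ltW alo_gt0) al) w_ge.
  by rewrite (max_idPl Delta0) -eucdotZl; lra.
rewrite -ltNge => /ltW /max_idPr ->; rewrite !mul0r mulr0.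
have ahi0 : 0 <= ahi := le_trans (le_trans (ltW alo_gt0) al) ah.
have := mulr_ge0 ahi0 (le_trans sigma0 sigma_le); lra.
Qed.

Lemma Phi_frequently_le c : ahi * eps0 < c -> forall N, exists k, (N <= k)%N /\ Phi k <= c.
Proof.
move=> c_gt N; apply: contrapT => noPhi_le.
have Phi_gt k : (N <= k)%N -> c < Phi k.
  by move=> Nk; rewrite ltNge; apply/negP => Phi_le; apply: noPhi_le; exists k.
have [xs Oxs] := Omega0.
have eta0 : 0 < Num.max mu Mbar by rewrite lt_max hmu.
apply: (@nonneg_descent_contra _ (fun k => eucdot (x k - xs) (x k - xs)) lambda
  (2 * (c - ahi * eps0) / Num.max mu Mbar) N) => // [|k|k Nk].
- by rewrite divr_gt0 // mulr_gt0 // subr_gt0.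
- exact: eucdotii_ge0.
apply: normalized_step_le (hx k) hmu (ltW (lambda_gt0 k)) (d_bnd k) _ _; last lra.
have := eucdot_dir_ge k Oxs; have := Phi_gt k Nk; lra.
Qed.

Lemma abp_subseq_bounds : exists (kj : nat -> nat) (L : R),
  (forall j, (kj j < kj j.+1)%N) /\ 0 <= L <= ahi * eps0 /\ (Phi \o kj) @ \oo --> L /\
  forall xhat, cluster ((x \o kj) @ \oo) xhat ->
    [/\ Hf C xhat <= L / blo, Gf f Q xhat <= L / glo & phi xhat <= philb f C r + L / alo].
Proof.
have [kj [L [kj_incr [L_bnd PhiL]]]] := subseq_cvg_le Phi_ge0 Phi_frequently_le.
exists kj, L; split => //; split => //; split => // xhat cl.
have fc i : continuous (f i) := fun y => differentiable_continuous (f_diff i y).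
have PhiL_div b : (Phi \o kj) \* cst b^-1 @ \oo --> L / b.
  by apply: cvgM => //; exact: cvg_cst.
split.
- apply: cluster_le_lim (@Hf_continuous xhat) (PhiL_div blo) _ cl => j /=.
  by rewrite ler_pdivlMr // mulrC; case: (Phi_ge_parts (kj j)).
- apply: cluster_le_lim (@Gf_continuous xhat Q0 fc) (PhiL_div glo) _ cl => j /=.
  by rewrite ler_pdivlMr // mulrC; case: (Phi_ge_parts (kj j)).
apply: phi_le => i.
apply: cluster_le_lim (@term_continuous i xhat (fc i)) (cvgD (cvg_cst _) (PhiL_div alo)) _ cl.
move=> j /=; apply: le_trans (phi_ge _ i) _; rewrite -lerBlDl ler_pdivlMr // mulrC.
have [aPhi _ _] := Phi_ge_parts (kj j); apply: le_trans aPhi.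
by rewrite ler_wpM2l ?(ltW alo_gt0) // le_max lexx.
Qed.

End ABPIteration.

End ABPProblem.

Theorem theorem2 (R : realType) (n m : nat) (hn : (0 < n)%N) (hm : (0 < m)%N)
  (f : 'I_m -> 'rV[R]_n -> R) (C : set 'rV[R]_n) (Q : set 'rV[R]_m)
  (r : 'I_m -> R)
  (hr_pos : forall i, 0 < r i) (hr_sum : \sum_(i < m) r i = 1)
  (* algorithm data *)
  (mu : R) (hmu : 0 < mu)
  (alpha beta gamma lambda : nat -> R)
  (x : nat -> 'rV[R]_n) (p : nat -> 'rV[R]_m) (PC : nat -> 'rV[R]_n)
  (istar : nat -> 'I_m)
  (hp : forall k, is_proj (Qplus Q) (Fvec f (x k)) (p k))
  (hPC : forall k, is_proj C (x k) (PC k))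
  (histar : forall k i,
     r i * (f i (x k) - zstar f C i)
       <= r (istar k) * (f (istar k) (x k) - zstar f C (istar k)))
  (d : nat -> 'rV[R]_n)
  (hd : forall k, d k =
      (if 0 <= phi f C r (x k) - philb f C r then alpha k else 0)
          *: (r (istar k) *: grad (f (istar k)) (x k))
      + beta k *: (x k - PC k)
      + gamma k *: JT f (x k) (Fvec f (x k) - p k))
  (hx : forall k, x k.+1 =
      x k - (lambda k / Num.max mu (eucnorm (d k))) *: d k)
  (* (A1) *)
  (A1 : forall i, C1 (f i))
  (* (A2) *)
  (A2C : C !=set0 /\ closed C /\ convex_set_rV C)
  (A2Q : Q !=set0 /\ closed Q /\ convex_set_rV Q)
  (A2z : forall i, has_lbound [set f i y | y in C])
  (* (A3) *)
  (A3 : forall i (y z : 'rV[R]_n) (t : R), 0 <= t <= 1 ->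
          f i (t *: y + (1 - t) *: z) <= t * f i y + (1 - t) * f i z)
  (* (A4) *)
  (A4 : Omega f C Q r !=set0)
  (* (A5) *)
  (A5pos : forall k, 0 < lambda k)
  (A5div : [series lambda k]_k @ \oo --> +oo)
  (A5sq : cvgn [series lambda k ^+ 2]_k)
  (* (A6) *)
  (alo ahi blo bhi glo ghi : R)
  (hal : 0 < alo) (hah : alo <= ahi) (hbl : 0 < blo) (hbh : blo <= bhi)
  (hgl : 0 < glo) (hgh : glo <= ghi)
  (A6 : forall k, [/\ alo <= alpha k <= ahi, blo <= beta k <= bhi
                    & glo <= gamma k <= ghi])
  (* (A7') *)
  (eps0 : R) (heps0 : 0 <= eps0)
  (A7 : phistar f C Q r - philb f C r <= eps0)
  (* (A8) *)
  (B : R) (A8 : forall k, eucnorm (x k) <= B)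
  (* uniform bound on the directions *)
  (Mbar : R) (hM : forall k, eucnorm (d k) <= Mbar) :
  let Cstar := ahi * Num.max mu Mbar / mu in
  let Phi k := alpha k * Num.max (phi f C r (x k) - philb f C r) 0
               + beta k * Hf C (x k) + gamma k * Gf f Q (x k) in
  exists (kj : nat -> nat) (lstar : R),
    (forall j, (kj j < kj j.+1)%N) /\
    0 <= lstar <= Cstar * eps0 /\
    (Phi \o kj) @ \oo --> lstar /\
    forall xhat, cluster ((x \o kj) @ \oo) xhat ->
      [/\ (Hf C xhat <= lstar / blo /\ lstar / blo <= Cstar * eps0 / blo
           /\ setdist xhat C <= Num.sqrt (2 * Cstar * eps0 / blo)),
          (Gf f Q xhat <= lstar / glo /\ lstar / glo <= Cstar * eps0 / glo
           /\ setdist (Fvec f xhat) (Qplus Q) <= Num.sqrt (2 * Cstar * eps0 / glo)),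
          (phi f C r xhat <= philb f C r + lstar / alo
           /\ philb f C r + lstar / alo <= phistar f C Q r + Cstar * eps0 / alo)
        & (eps0 = 0 -> lstar = 0 /\ Omega f C Q r xhat)].
Proof.
move=> Cstar Phi.
have [C0 [C_closed C_convex]] := A2C; have [Q0 [_ Q_convex]] := A2Q.
have r_ge0 i : 0 <= r i := ltW (hr_pos i).
have alpha_bnd k : alo <= alpha k <= ahi by case: (A6 k).
have beta_ge k : blo <= beta k by case: (A6 k) => _ /andP[].
have gamma_ge k : glo <= gamma k by case: (A6 k) => _ _ /andP[].
have S0 : Sfeas f C Q !=set0 by case: A4 => y [Sy _]; exists y.
have [kj [L [kj_incr [/andP[L0 L_le] [PhiL cl_bnd]]]]] :=
  abp_subseq_bounds hm r_ge0 A2z C0 C_closed (fun i => (A1 i).1) A3 C_convex Q_convex Q0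
    hmu hp hPC histar hd hx A5pos A5div A5sq hal hbl hgl alpha_bnd beta_ge gamma_ge A4 A7 hM.
have L_Cstar : L <= Cstar * eps0.
  have : 1 <= Num.max mu Mbar / mu by rewrite ler_pdivlMr // mul1r le_max lexx.
  move/(ler_wpM2l (mulr_ge0 (le_trans (ltW hal) hah) heps0)); rewrite /Cstar; lra.
have div_le b : 0 < b -> L / b <= Cstar * eps0 / b.
  by move=> b0; apply: ler_wpM2r L_Cstar; rewrite invr_ge0 ltW.
have sqrt_le s b : 0 < b -> 0 <= s -> s ^+ 2 / 2 <= L / b ->
    s <= Num.sqrt (2 * Cstar * eps0 / b).
  move=> b0 s0 sL; have -> : 2 * Cstar * eps0 / b = 2 * (Cstar * eps0 / b) by rewrite !mulrA.
  exact: sqr_half_le_sqrt s0 (le_trans sL (div_le b b0)).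
exists kj, L; split=> //; split; first by rewrite L0 L_Cstar.
split=> // xhat /cl_bnd [hH hG hphi]; split.
- by do !split=> //; [exact: div_le | exact: sqrt_le hbl (setdist_ge0 _ C0) hH].
- do !split=> //; first exact: div_le.
  exact: sqrt_le hgl (setdist_ge0 _ (Qplus_neq0 Q0)) hG.
- have := philb_le_phistar hm r_ge0 A2z C0 C_closed S0; have := div_le alo hal.
  by split=> //; lra.
move=> eps0_0; have L_0 : L = 0 by apply/le_anti; rewrite L0 -(mulr0 Cstar) -eps0_0 L_Cstar.
split=> //; move: hH hG hphi; rewrite L_0 !mul0r addr0.
exact: Omega_of_bounds.
Qed.
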